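(* There is an absolute constant $C$ such that the following holds. Let $\mathcal P$ be an uncertain point set in $\mathbb R^d$, $\varepsilon>0$, $\delta\in(0,1)$, and $T=\{z_1,\dots,z_m\}\subset\mathbb R^d$ a finite set such that for every traversal $Q$ the chosen median $m_Q$ is $\frac{\varepsilon}{1+\varepsilon}$-covered by some point of $T$. Let $\hat w_i=\Pr_Q[f_T(m_Q)=z_i]$ for $Q$ a uniformly random traversal. Draw $N\ge \frac{C}{\varepsilon^2}(d+\log\frac1\delta)$ independent uniformly random traversals $Q_1,\dots,Q_N$ and let $c_i=\frac1N|\{t: f_T(m_{Q_t})=z_i\}|$. Then $$\Pr\Big[\max_{1\le i\le m}|c_i-\hat w_i|\le\varepsilon\Big]>1-\delta.$$
   Context: Each uncertain point $P_i$ ($i=1,\dots,n$) has $k$ equally likely locations $p_{i,1},\dots,p_{i,k}\in\mathbb R^d$; a uniformly random traversal picks independently for each $i$ a uniformly random location $q_i$ of $P_i$. $\mathrm{cost}(p,Q)=\frac1n\sum_i\|p-q_i\|$; an $L_1$ median of $Q$ minimizes $\mathrm{cost}(\cdot,Q)$; $Q\mapsto m_Q$ is a fixed rule selecting one $L_1$ median of each traversal. $\widehat{\mathrm{cost}}(x)=\frac1n\sum_i\min_j\|x-p_{i,j}\|$. A point $z$ $\gamma$-covers $q$ if $\|z-q\|\le\gamma\,\widehat{\mathrm{cost}}(z)$. $f_T(q)$ is the point $z\in T$ minimizing $\|q-z\|$ among those $z\in T$ that $\frac{\varepsilon}{1+\varepsilon}$-cover $q$, ties broken by lexicographically smallest coordinates.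 *)

From Stdlib Require Import Reals ClassicalEpsilon.
From mathcomp Require Import all_boot.

Set Implicit Arguments.
Unset Strict Implicit.
Unset Printing Implicit Defensive.

Local Open Scope R_scope.

Definition point (d : nat) := 'I_d -> R.

Definition dist {d : nat} (x y : point d) : R :=
  sqrt (\big[Rplus/0]_(j < d) ((x j - y j) * (x j - y j))).

Definition ind (P : Prop) : R :=
  if excluded_middle_informative P then 1 else 0.

(* An uncertain point set: n uncertain points, each with k locations;
   p i j = p_{i,j}.  A traversal picks a location index for each i. *)
Definition traversal (n k : nat) := {ffun 'I_n -> 'I_k}.

Definition cost {d n k : nat} (p : 'I_n -> 'I_k -> point d)
  (x : point d) (Q : traversal n k) : R :=
  / INR n * \big[Rplus/0]_(i < n) dist x (p i (Q i)).

Definition min_list (l : seq R) : R :=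
  match l with [::] => 0 | a :: l' => foldr Rmin a l' end.

Definition hatcost {d n k : nat} (p : 'I_n -> 'I_k -> point d) (x : point d) : R :=
  / INR n * \big[Rplus/0]_(i < n) min_list [seq dist x (p i j) | j <- enum 'I_k].

Definition covers {d n k : nat} (p : 'I_n -> 'I_k -> point d)
  (gamma : R) (z q : point d) : Prop :=
  dist z q <= gamma * hatcost p z.

Definition lex_le {d : nat} (x y : point d) : Prop :=
  (forall c, x c = y c) \/
  exists c : 'I_d, (forall c' : 'I_d, (c' < c)%N -> x c' = y c') /\ x c < y c.

Definition fT_is {d n k m : nat} (p : 'I_n -> 'I_k -> point d) (eps : R)
  (z : 'I_m -> point d) (q : point d) (i : 'I_m) : Prop :=
  covers p (eps / (1 + eps)) (z i) q /\
  forall j : 'I_m, covers p (eps / (1 + eps)) (z j) q ->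
    dist q (z i) < dist q (z j) \/
    (dist q (z i) = dist q (z j) /\ lex_le (z i) (z j)).

Definition is_median {d n k : nat} (p : 'I_n -> 'I_k -> point d)
  (Q : traversal n k) (x : point d) : Prop :=
  forall y : point d, cost p x Q <= cost p y Q.

Definition what {d n k m : nat} (p : 'I_n -> 'I_k -> point d) (eps : R)
  (z : 'I_m -> point d) (med : traversal n k -> point d) (i : 'I_m) : R :=
  (\big[Rplus/0]_(Q : traversal n k) ind (fT_is p eps z (med Q) i))
  / INR #|{: traversal n k}|.

Definition cfreq {d n k m N : nat} (p : 'I_n -> 'I_k -> point d) (eps : R)
  (z : 'I_m -> point d) (med : traversal n k -> point d)
  (S : {ffun 'I_N -> traversal n k}) (i : 'I_m) : R :=
  (\big[Rplus/0]_(t < N) ind (fT_is p eps z (med (S t)) i)) / INR N.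

Definition prob_samples {n k N : nat}
  (E : {ffun 'I_N -> traversal n k} -> Prop) : R :=
  (\big[Rplus/0]_(S : {ffun 'I_N -> traversal n k}) ind (E S))
  / INR #|{: {ffun 'I_N -> traversal n k}}|.

(* For each z_i the indicator X_i(Q) of [f_T(m_Q) = z_i] is a 0/1 random variable
   of mean hat w_i, and c_i is the empirical mean of N independent copies.  The
   multiplicative Chernoff bound gives Pr[|c_i - hat w_i| > eps] <= 2 hat w_i rho with
   rho = exp (3 - N eps^2 / 8); the factor hat w_i is what makes the union bound
   over the (arbitrarily many) points of T work, since f_T is a function and so
   sum_i hat w_i <= 1.  The sample size makes 2 rho < delta. *)

From Stdlib Require Import Rbase Rfunctions Rtrigo_def Exp_prop Rpower R_sqrt.
From Stdlib Require Import Lra Psatz ClassicalEpsilon.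
From mathcomp Require Import all_boot Rstruct.

Set Implicit Arguments.
Unset Strict Implicit.

Local Open Scope R_scope.

Lemma exp_le_compat x y : x <= y -> exp x <= exp y.
Proof. by case=> [/exp_increasing/Rlt_le|->]; [|apply: Rle_refl]. Qed.

Lemma ln_ge_1_sub_inv w : 0 < w -> 1 - / w <= ln w.
Proof.
move=> w_gt0; have := exp_ineq1_le (ln (/ w)).
by rewrite exp_ln ?ln_Rinv //; [lra | apply: Rinv_0_lt_compat].
Qed.

Lemma exp_neg_div_le a w : 1 <= a -> 0 < w <= 1 -> exp (- a / w) <= w * exp (- a).
Proof.
move=> a_ge1 [w_gt0 w_le1].
have ln_w := ln_ge_1_sub_inv w_gt0.
have inv_w_ge1 : 1 <= / w by rewrite -Rinv_1; apply: Rinv_le_contravar.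
have : - a / w <= - a + ln w.
  have -> : - a / w = - a + a * (1 - / w) by field; lra.
  nra.
move=> /exp_le_compat; rewrite exp_plus exp_ln //; lra.
Qed.

Lemma exp_le_quadratic l : 0 <= l <= / 2 -> exp l <= 1 + l + 2 * l ^ 2.
Proof.
move=> l_bd; have := exp_ineq1_le (- l); rewrite exp_Ropp => inv_ge.
have el_gt0 := exp_pos l.
have : (1 - l) * exp l <= 1.
  have := Rmult_le_compat_r (exp l) _ _ (Rlt_le _ _ el_gt0) inv_ge.
  by rewrite Rinv_l; [lra | apply: Rgt_not_eq].
have : 0 <= l ^ 2 * (1 - 2 * l) by apply: Rmult_le_pos; nra.
move=> *; apply: (Rmult_le_reg_l (1 - l)); nra.
Qed.

Lemma exp_neg_le_quadratic l : 0 <= l -> exp (- l) <= 1 - l + l ^ 2.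
Proof.
move=> l_ge0; rewrite exp_Ropp.
have el_ge := exp_ineq1_le l; have el_gt0 := exp_pos l.
have : 0 <= (exp l - (1 + l)) * (1 - l + l ^ 2) by apply: Rmult_le_pos; nra.
have : 0 <= l ^ 3 by apply: pow_le.
move=> *; apply: (Rmult_le_reg_l (exp l)) => //; rewrite Rinv_r; nra.
Qed.

(* [exp (chernoff_exponent N w r l)] bounds [e^(-l r) E[e^(l (X_1 + ... + X_N))]]
   for N independent 0/1 variables of mean w, via [1 + x <= e^x]. *)
Definition chernoff_exponent (N w r l : R) : R := - l * r + N * (w * (exp l - 1)).

Section ChernoffExponent.
Variables N eps w : R.
Hypotheses (N_gt0 : 0 < N) (eps_gt0 : 0 < eps) (Neps2_ge80 : 80 <= N * eps ^ 2).

Lemma chernoff_upper_exponent_large_mean : eps / 2 <= w <= 1 ->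
  exp (chernoff_exponent N w (N * (w + eps)) (eps / (4 * w)))
  <= w * exp (3 - N * eps ^ 2 / 8).
Proof.
move=> [w_ge w_le1]; set l := eps / (4 * w).
have l_bd : 0 <= l <= / 2.
  rewrite /l; split; first by apply: Rlt_le; apply: Rdiv_lt_0_compat; lra.
  apply: (Rmult_le_reg_r (4 * w)); first lra.
  by rewrite /Rdiv Rmult_assoc Rinv_l; lra.
have el_le := exp_le_quadratic l_bd.
have : chernoff_exponent N w (N * (w + eps)) l <= - (N * eps ^ 2 / 8) / w.
  have -> : - (N * eps ^ 2 / 8) / w = N * (2 * w * l ^ 2 - l * eps) by rewrite /l; field; lra.
  rewrite /chernoff_exponent.
  have : w * (exp l - 1) <= w * (l + 2 * l ^ 2) by apply: Rmult_le_compat_l; lra.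
  nra.
move=> /exp_le_compat /Rle_trans; apply.
apply: Rle_trans (exp_neg_div_le _ _) _; try lra.
apply: Rmult_le_compat_l; first lra.
apply: exp_le_compat; lra.
Qed.

Lemma chernoff_lower_exponent : eps <= w <= 1 ->
  exists2 l, 0 < l &
    exp (chernoff_exponent N w (N * (w - eps)) (- l)) <= w * exp (3 - N * eps ^ 2 / 8).
Proof.
move=> [w_ge w_le1]; set l := eps / (2 * w).
have l_gt0 : 0 < l by apply: Rdiv_lt_0_compat; lra.
exists l => //.
have el_le := exp_neg_le_quadratic (Rlt_le _ _ l_gt0).
have : chernoff_exponent N w (N * (w - eps)) (- l) <= - (N * eps ^ 2 / 4) / w.
  have -> : - (N * eps ^ 2 / 4) / w = N * (w * l ^ 2 - l * eps) by rewrite /l; field; lra.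
  rewrite /chernoff_exponent.
  have : w * (exp (- l) - 1) <= w * (- l + l ^ 2) by apply: Rmult_le_compat_l; lra.
  nra.
move=> /exp_le_compat /Rle_trans; apply.
apply: Rle_trans (exp_neg_div_le _ _) _; try lra.
apply: Rmult_le_compat_l; first lra.
apply: exp_le_compat; lra.
Qed.

Hypothesis eps_le1 : eps <= 1.

Lemma chernoff_small_mean_bound : 0 <= w ->
  w / eps * exp (2 - N * eps / 2) <= w * exp (3 - N * eps ^ 2 / 8).
Proof.
move=> w_ge0; have inv_eps_le := exp_ineq1_le (/ eps - 1).
have inv_eps_ge1 : 1 <= / eps by rewrite -Rinv_1; apply: Rinv_le_contravar.
rewrite /Rdiv Rmult_assoc; apply: Rmult_le_compat_l => //.
apply: Rle_trans (_ : exp (/ eps - 1) * exp (2 - N * eps / 2) <= _).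
  by apply: Rmult_le_compat_r; [apply: Rlt_le; apply: exp_pos | lra].
rewrite -exp_plus; apply: exp_le_compat.
have -> : N * eps = (N * eps ^ 2) * / eps by field; lra.
have : (N * eps ^ 2 / 2 - 1) * 1 <= (N * eps ^ 2 / 2 - 1) * / eps
  by apply: Rmult_le_compat_l; lra.
lra.
Qed.

Lemma chernoff_upper_exponent_tiny_mean : 0 < w -> w * exp 2 <= eps ->
  exp (chernoff_exponent N w (N * (w + eps)) (ln (eps / w)))
  <= w * exp (3 - N * eps ^ 2 / 8).
Proof.
move=> w_gt0 w_tiny; set l := ln (eps / w).
have el : exp l = eps / w by rewrite exp_ln //; apply: Rdiv_lt_0_compat.
have l_ge2 : 2 <= l.
  apply: Rnot_lt_le => /exp_increasing; rewrite el.
  apply: Rle_not_lt; apply: (Rmult_le_reg_r w) => //.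
  by rewrite /Rdiv Rmult_assoc Rinv_l; lra.
have Neps_ge1 : 1 <= N * eps.
  have : N * eps ^ 2 <= N * eps by rewrite /= Rmult_1_r; apply: Rmult_le_compat_l; nra.
  lra.
have : chernoff_exponent N w (N * (w + eps)) l <= 2 - l - N * eps.
  rewrite /chernoff_exponent el.
  have -> : w * (eps / w - 1) = eps - w by field; lra.
  have : 0 <= l * N * w by apply: Rmult_le_pos; [apply: Rmult_le_pos|]; lra.
  have : 0 <= (N * eps - 1) * (l - 2) by apply: Rmult_le_pos; lra.
  nra.
move=> /exp_le_compat /Rle_trans; apply.
apply: Rle_trans (chernoff_small_mean_bound (Rlt_le _ _ w_gt0)).
have -> : 2 - l - N * eps = - l + (2 - N * eps) by ring.
rewrite exp_plus exp_Ropp el.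
have -> : / (eps / w) = w / eps by field; lra.
apply: Rmult_le_compat_l; first by apply: Rlt_le; apply: Rdiv_lt_0_compat.
apply: exp_le_compat; nra.
Qed.

Lemma chernoff_upper_exponent_small_mean : eps < w * exp 2 -> 0 < w < eps / 2 ->
  exp (chernoff_exponent N w (N * (w + eps)) 1) <= w * exp (3 - N * eps ^ 2 / 8).
Proof.
move=> w_not_tiny [w_gt0 w_small]; have e_le3 := exp_le_3.
have : chernoff_exponent N w (N * (w + eps)) 1 <= - (N * eps) / 2.
  rewrite /chernoff_exponent.
  have : w * (exp 1 - 2) <= w * 1 by apply: Rmult_le_compat_l; lra.
  nra.
move=> /exp_le_compat /Rle_trans; apply.
apply: Rle_trans (chernoff_small_mean_bound (Rlt_le _ _ w_gt0)).
have -> : w / eps * exp (2 - N * eps / 2) = w / eps * exp 2 * exp (- (N * eps) / 2).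
  by rewrite Rmult_assoc -exp_plus; do 2 f_equal; field.
rewrite -[X in X <= _]Rmult_1_l; apply: Rmult_le_compat_r; first exact: Rlt_le (exp_pos _).
apply: (Rmult_le_reg_r eps) => //.
have -> : w / eps * exp 2 * eps = w * exp 2 by field; lra.
lra.
Qed.

(* The optimal l is about ln (1 + eps / w), unbounded as w -> 0, hence the
   three regimes. *)
Lemma chernoff_upper_exponent : 0 < w <= 1 ->
  exists2 l, 0 < l &
    exp (chernoff_exponent N w (N * (w + eps)) l) <= w * exp (3 - N * eps ^ 2 / 8).
Proof.
move=> [w_gt0 w_le1].
have [w_large|w_small] := Rle_lt_dec (eps / 2) w.
  exists (eps / (4 * w)); first by apply: Rdiv_lt_0_compat; lra.
  exact: chernoff_upper_exponent_large_mean.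
have [w_tiny|w_not_tiny] := Rle_lt_dec (w * exp 2) eps.
  exists (ln (eps / w)); last exact: chernoff_upper_exponent_tiny_mean.
  rewrite -ln_1; apply: ln_increasing; first lra.
  have := exp_pos 2; have : 1 < exp 2 by rewrite -exp_0; apply: exp_increasing; lra.
  move=> *; apply: (Rmult_lt_reg_r w) => //.
  by rewrite /Rdiv Rmult_assoc Rinv_l; nra.
exists 1; first lra.
exact: chernoff_upper_exponent_small_mean.
Qed.

End ChernoffExponent.

Lemma sum_le (I : finType) (F G : I -> R) :
  (forall i, F i <= G i) -> \big[Rplus/0]_(i : I) F i <= \big[Rplus/0]_(i : I) G i.
Proof. by move=> FG; apply: (big_ind2 (fun x y => x <= y)) => *; lra || apply: FG. Qed.

Lemma sum_ge0 (I : finType) (P : pred I) (F : I -> R) :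
  (forall i, 0 <= F i) -> 0 <= \big[Rplus/0]_(i | P i) F i.
Proof. by move=> F_ge0; apply: (big_ind (fun x => 0 <= x)) => *; lra || apply: F_ge0. Qed.

Lemma sum_const (I : finType) (c : R) : \big[Rplus/0]_(i : I) c = INR #|{: I}| * c.
Proof.
rewrite big_const; elim: #|_| => [|n IH]; first by rewrite /=; ring.
by rewrite [iter _ _ _]/= IH S_INR; ring.
Qed.

Lemma INR_card_ffun (I T : finType) : INR #|{: {ffun I -> T}}| = INR #|{: T}| ^ #|I|.
Proof.
rewrite card_ffun; elim: #|I| => [|n IH] //=.
by rewrite expnS mult_INR IH.
Qed.

Lemma sum_ffun_prod (I T : finType) (g : T -> R) :
  \big[Rplus/0]_(S : {ffun I -> T}) \big[Rmult/1]_(t : I) g (S t)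
  = (\big[Rplus/0]_(q : T) g q) ^ #|I|.
Proof.
rewrite -(bigA_distr_bigA (fun (_ : I) q => g q)) big_const.
by elim: #|I| => [|n IH] //=; rewrite IH.
Qed.

Lemma ind_true (P : Prop) : P -> ind P = 1.
Proof. by rewrite /ind; case: excluded_middle_informative. Qed.

Lemma ind_false (P : Prop) : ~ P -> ind P = 0.
Proof. by rewrite /ind; case: excluded_middle_informative. Qed.

Lemma ind_01 (P : Prop) : ind P = 0 \/ ind P = 1.
Proof. by rewrite /ind; case: excluded_middle_informative; [right | left]. Qed.

Lemma ind_bounds (P : Prop) : 0 <= ind P <= 1.
Proof. rewrite /ind; case: excluded_middle_informative => ? /=; lra. Qed.

Lemma ind_le (P Q : Prop) : (P -> Q) -> ind P <= ind Q.
Proof.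
move=> PQ; case: (classic P) => [p|np]; last first.
  by rewrite ind_false //; case: (ind_bounds Q).
by rewrite !ind_true //; [lra | apply: PQ].
Qed.

Lemma ind_exists_le (I : finType) (P : I -> Prop) :
  ind (exists i, P i) <= \big[Rplus/0]_(i : I) ind (P i).
Proof.
case: (classic (exists i, P i)) => [[i Pi]|noP].
  rewrite ind_true; last by exists i.
  rewrite (bigD1 i) //= ind_true //.
  have := sum_ge0 (fun j => j != i) (fun j => proj1 (ind_bounds (P j))); lra.
by rewrite ind_false //; apply: sum_ge0 => i; case: (ind_bounds (P i)).
Qed.

Lemma sum_ind_unique_le1 (I : finType) (P : I -> Prop) :
  (forall i j, P i -> P j -> i = j) -> \big[Rplus/0]_(i : I) ind (P i) <= 1.
Proof.
move=> P_unique; case: (classic (exists i, P i)) => [[i Pi]|noP].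
  rewrite (bigD1 i) //= ind_true // big1; first lra.
  by move=> j /eqP ji; apply: ind_false => Pj; exact: ji (P_unique _ _ Pj Pi).
by rewrite big1; [lra | move=> j _; apply: ind_false => Pj; apply: noP; exists j].
Qed.

Definition prob (O : finType) (E : O -> Prop) : R :=
  (\big[Rplus/0]_(S : O) ind (E S)) / INR #|{: O}|.

Section Probability.
Variable O : finType.
Hypothesis O_nonempty : (0 < #|O|)%N.

Let card_gt0 : 0 < INR #|{: O}|.
Proof. exact/lt_0_INR/ltP. Qed.

Lemma prob_le (E1 E2 : O -> Prop) : (forall S, E1 S -> E2 S) -> prob E1 <= prob E2.
Proof.
move=> E12; apply: Rmult_le_compat_r; first exact/Rlt_le/Rinv_0_lt_compat.
by apply: sum_le => S; apply: ind_le; apply: E12.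
Qed.

Lemma prob_eq0 (E : O -> Prop) : (forall S, ~ E S) -> prob E = 0.
Proof.
by move=> noE; rewrite /prob big1 ?Rdiv_0_l // => S _; apply: ind_false.
Qed.

Lemma prob_or_le (E1 E2 : O -> Prop) :
  prob (fun S => E1 S \/ E2 S) <= prob E1 + prob E2.
Proof.
rewrite /prob -Rdiv_plus_distr -big_split /=.
apply: Rmult_le_compat_r; first exact/Rlt_le/Rinv_0_lt_compat.
apply: sum_le => S; case: (classic (E1 S)) => [E1S|nE1S].
  rewrite ind_true; last by left.
  by rewrite ind_true //; case: (ind_bounds (E2 S)); lra.
rewrite [ind (E1 S)]ind_false // Rplus_0_l; apply: ind_le; tauto.
Qed.

Lemma prob_forall_gt (I : finType) (A B : I -> O -> Prop) (delta : R) :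
  (forall i S, ~ A i S -> B i S) ->
  \big[Rplus/0]_(i : I) prob (B i) < delta ->
  1 - delta < prob (fun S => forall i, A i S).
Proof.
move=> AB sum_lt.
have pointwise S : 1 - \big[Rplus/0]_(i : I) ind (B i S) <= ind (forall i, A i S).
  case: (classic (forall i, A i S)) => [allA|notall].
    rewrite ind_true //; have := sum_ge0 (fun _ => true) (fun i => proj1 (ind_bounds (B i S))); lra.
  have exB : exists i, B i S.
    by apply: NNPP => noB; apply: notall => i; apply: NNPP => nA; apply: noB; exists i; auto.
  rewrite ind_false //; have := ind_exists_le (fun i => B i S).
  by rewrite ind_true //; lra.
have sum_prob : \big[Rplus/0]_(i : I) prob (B i)
    = (\big[Rplus/0]_(S : O) \big[Rplus/0]_(i : I) ind (B i S)) / INR #|{: O}|.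
  by rewrite exchange_big /Rdiv big_distrl.
move: sum_lt; rewrite sum_prob /prob.
set SB := \big[Rplus/0]_(S : O) \big[Rplus/0]_(i : I) ind (B i S) => sum_lt.
have total : INR #|{: O}| - SB <= \big[Rplus/0]_(S : O) ind (forall i, A i S).
  apply: Rle_trans (sum_le pointwise); rewrite /Rminus big_split /= sum_const.
  by rewrite (big_morph Ropp Ropp_plus_distr Ropp_0) Rmult_1_r; apply: Rle_refl.
have scaled : (INR #|{: O}| - SB) / INR #|{: O}| <= \big[Rplus/0]_(S : O) ind (forall i, A i S) / INR #|{: O}|.
  by apply: Rmult_le_compat_r total; exact/Rlt_le/Rinv_0_lt_compat.
have split_ratio : (INR #|{: O}| - SB) / INR #|{: O}| = 1 - SB / INR #|{: O}| by field; lra.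
rewrite split_ratio in scaled.
lra.
Qed.

End Probability.

Lemma sum_eq0_ge0 (I : finType) (F : I -> R) :
  (forall i, 0 <= F i) -> \big[Rplus/0]_(i : I) F i = 0 -> forall i, F i = 0.
Proof.
move=> F_ge0 sum0 i; move: sum0; rewrite (bigD1 i) //=.
have := sum_ge0 (fun j => j != i) F_ge0; have := F_ge0 i; lra.
Qed.

Section BernoulliSampling.
Variables (T : finType) (X : T -> R) (N : nat).
Hypothesis X01 : forall q, X q = 0 \/ X q = 1.
Hypothesis T_nonempty : (0 < #|T|)%N.
Hypothesis N_gt0 : (0 < N)%N.

Definition mean : R := (\big[Rplus/0]_(q : T) X q) / INR #|{: T}|.

Definition sample_sum (S : {ffun 'I_N -> T}) : R := \big[Rplus/0]_(t < N) X (S t).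

Let card_gt0 : 0 < INR #|{: T}|.
Proof. exact/lt_0_INR/ltP. Qed.

Let N_pos : 0 < INR N.
Proof. exact/lt_0_INR/ltP. Qed.

Let X_bounds q : 0 <= X q <= 1.
Proof. by case: (X01 q) => ->; lra. Qed.

Lemma mean_bounds : 0 <= mean <= 1.
Proof.
rewrite /mean; split.
  apply: Rmult_le_pos; last exact/Rlt_le/Rinv_0_lt_compat.
  by apply: sum_ge0 => q; case: (X_bounds q).
apply: (Rmult_le_reg_r (INR #|{: T}|)) => //.
rewrite /Rdiv Rmult_assoc Rinv_l ?Rmult_1_l ?Rmult_1_r; last lra.
by rewrite -[X in _ <= X]Rmult_1_r -sum_const; apply: sum_le => q; case: (X_bounds q).
Qed.

Lemma sample_mean_bounds S : 0 <= sample_sum S / INR N <= 1.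
Proof.
have sum_bd : 0 <= sample_sum S <= INR N.
  split; first by apply: sum_ge0 => t; case: (X_bounds (S t)).
  have -> : INR N = \big[Rplus/0]_(t < N) 1 by rewrite sum_const card_ord; ring.
  by apply: sum_le => t; case: (X_bounds (S t)).
split; first by apply: Rmult_le_pos; [lra | exact/Rlt_le/Rinv_0_lt_compat].
apply: (Rmult_le_reg_r (INR N)) => //.
rewrite /Rdiv Rmult_assoc Rinv_l; lra.
Qed.

Lemma chernoff_bound (r l : R) :
  prob (fun S => 0 < l * (sample_sum S - r))
  <= exp (chernoff_exponent (INR N) mean r l).
Proof.
have cardN_gt0 : 0 < INR #|{: {ffun 'I_N -> T}}|.
  by rewrite INR_card_ffun; apply: pow_lt.
have markov : prob (fun S => 0 < l * (sample_sum S - r))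
    <= (\big[Rplus/0]_(S : {ffun 'I_N -> T})
          (exp (- l * r) * \big[Rmult/1]_(t < N) exp (l * X (S t))))
       / INR #|{: {ffun 'I_N -> T}}|.
  apply: Rmult_le_compat_r; first exact/Rlt_le/Rinv_0_lt_compat.
  apply: sum_le => S.
  rewrite -(big_morph exp exp_plus exp_0) -exp_plus.
  have -> : - l * r + \big[Rplus/0]_(t < N) (l * X (S t)) = l * (sample_sum S - r).
    by rewrite -big_distrr /sample_sum /=; ring.
  case: (classic (0 < l * (sample_sum S - r))) => [pos|nonpos].
    by rewrite ind_true //; have := exp_ineq1_le (l * (sample_sum S - r)); lra.
  by rewrite ind_false //; exact/Rlt_le/exp_pos.
have mgf : \big[Rplus/0]_(q : T) exp (l * X q)
    = INR #|{: T}| * (1 + mean * (exp l - 1)).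
  rewrite (eq_bigr (fun q => 1 + (exp l - 1) * X q)); last first.
    by move=> q _; case: (X01 q) => ->; rewrite ?Rmult_0_r ?exp_0 ?Rmult_1_r; ring.
  by rewrite big_split /= sum_const -big_distrr /mean /=; field; exact/Rgt_not_eq/card_gt0.
apply: Rle_trans markov _.
rewrite -big_distrr /= (sum_ffun_prod _ (fun q => exp (l * X q))) card_ord mgf.
rewrite INR_card_ffun card_ord Rpow_mult_distr /Rdiv Rmult_assoc.
rewrite (Rmult_comm (INR #|{: T}| ^ N)) Rmult_assoc Rinv_r; last exact/pow_nonzero/Rgt_not_eq.
rewrite Rmult_1_r /chernoff_exponent exp_plus.
apply: Rmult_le_compat_l; first exact/Rlt_le/exp_pos.
have -> : exp (INR N * (mean * (exp l - 1))) = exp (mean * (exp l - 1)) ^ N.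
  by rewrite -Rpower_pow ?/Rpower ?ln_exp //; apply: exp_pos.
apply: pow_incr; split; last exact: exp_ineq1_le.
by have [m0 m1] := mean_bounds; have := exp_pos l; nra.
Qed.

Let samples_nonempty : (0 < #|{: {ffun 'I_N -> T}}|)%N.
Proof. by rewrite card_ffun expn_gt0 T_nonempty. Qed.

Lemma mean_eq0_sample_sum S : mean = 0 -> sample_sum S = 0.
Proof.
move=> mean0; have sum0 : \big[Rplus/0]_(q : T) X q = 0.
  move: mean0; rewrite /mean /Rdiv => /Rmult_integral [] // /Rinv_neq_0_compat.
  by case; apply: Rgt_not_eq.
rewrite /sample_sum big1 // => t _.
by apply: (sum_eq0_ge0 (fun q => proj1 (X_bounds q))).
Qed.

Lemma upper_tail eps : 0 < eps -> 80 <= INR N * eps ^ 2 ->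
  prob (fun S => eps < sample_sum S / INR N - mean)
  <= mean * exp (3 - INR N * eps ^ 2 / 8).
Proof.
move=> eps_gt0 Neps2; have [mean_ge0 mean_le1] := mean_bounds.
have [mean0|mean_neq0] := Req_dec mean 0.
  rewrite prob_eq0 => [|S]; first by rewrite mean0 Rmult_0_l; apply: Rle_refl.
  by rewrite (mean_eq0_sample_sum S mean0) mean0 Rdiv_0_l; lra.
have [eps_le1|eps_gt1] := Rle_lt_dec eps 1; last first.
  rewrite prob_eq0 => [|S]; first by apply: Rmult_le_pos => //; exact/Rlt_le/exp_pos.
  by have := sample_mean_bounds S; lra.
have mean_gt0 : 0 < mean by case: mean_ge0 => // /esym.
have [l l_gt0 exponent_le] := @chernoff_upper_exponent (INR N) eps mean N_pos eps_gt0 Neps2 eps_le1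
  (conj mean_gt0 mean_le1).
apply: Rle_trans exponent_le.
apply: Rle_trans (chernoff_bound _ _); apply: prob_le => // S dev.
have -> : l * (sample_sum S - INR N * (mean + eps))
          = l * (INR N * (sample_sum S / INR N - mean - eps)) by field; lra.
by apply: Rmult_lt_0_compat => //; apply: Rmult_lt_0_compat; lra.
Qed.

Lemma lower_tail eps : 0 < eps -> 80 <= INR N * eps ^ 2 ->
  prob (fun S => eps < mean - sample_sum S / INR N)
  <= mean * exp (3 - INR N * eps ^ 2 / 8).
Proof.
move=> eps_gt0 Neps2; have [mean_ge0 mean_le1] := mean_bounds.
have [mean_lt|mean_ge] := Rlt_le_dec mean eps.
  rewrite prob_eq0 => [|S]; first by apply: Rmult_le_pos => //; exact/Rlt_le/exp_pos.
  by have := sample_mean_bounds S; lra.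
have [l l_gt0 exponent_le] := @chernoff_lower_exponent (INR N) eps mean N_pos eps_gt0 Neps2 (conj mean_ge mean_le1).
apply: Rle_trans exponent_le.
apply: Rle_trans (chernoff_bound _ _); apply: prob_le => // S dev.
have -> : - l * (sample_sum S - INR N * (mean - eps))
          = l * (INR N * (mean - eps - sample_sum S / INR N)) by field; lra.
by apply: Rmult_lt_0_compat => //; apply: Rmult_lt_0_compat; lra.
Qed.

Lemma sample_mean_deviation eps : 0 < eps -> 80 <= INR N * eps ^ 2 ->
  prob (fun S => eps < Rabs (sample_sum S / INR N - mean))
  <= 2 * exp (3 - INR N * eps ^ 2 / 8) * mean.
Proof.
move=> eps_gt0 Neps2.
apply: Rle_trans (_ : prob (fun S => eps < sample_sum S / INR N - mean
                                  \/ eps < mean - sample_sum S / INR N) <= _).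
  apply: prob_le => // S; rewrite /Rabs; case: Rcase_abs => _ ?; [right | left]; lra.
apply: Rle_trans (prob_or_le _ _ _) _ => //.
have := upper_tail eps_gt0 Neps2; have := lower_tail eps_gt0 Neps2; lra.
Qed.

Lemma sample_mean_deviation_const1 eps : (forall q, X q = 1) -> 0 <= eps ->
  prob (fun S => eps < Rabs (sample_sum S / INR N - mean)) = 0.
Proof.
move=> X1 eps_ge0; apply: prob_eq0 => S.
have -> : sample_sum S = INR N by rewrite /sample_sum (eq_bigr _ (fun t _ => X1 (S t))) sum_const card_ord; ring.
have -> : mean = 1.
  rewrite /mean (eq_bigr _ (fun q _ => X1 q)) sum_const Rmult_1_r /Rdiv Rinv_r //.
  exact/Rgt_not_eq/card_gt0.
by rewrite /Rdiv Rinv_r ?Rminus_diag ?Rabs_R0; lra.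
Qed.

End BernoulliSampling.

Lemma sum_mean_ind_le1 (T I : finType) (P : I -> T -> Prop) :
  (0 < #|T|)%N -> (forall q i j, P i q -> P j q -> i = j) ->
  \big[Rplus/0]_(i : I) mean (fun q => ind (P i q)) <= 1.
Proof.
move=> T_nonempty P_unique; have card_gt0 : 0 < INR #|{: T}| by exact/lt_0_INR/ltP.
rewrite /mean /Rdiv -big_distrl /= exchange_big /=.
apply: (Rmult_le_reg_r (INR #|{: T}|)) => //.
rewrite Rmult_assoc Rinv_l ?Rmult_1_l ?Rmult_1_r; last exact/Rgt_not_eq/card_gt0.
rewrite -[X in _ <= X]Rmult_1_r -sum_const; apply: sum_le => q.
by apply: sum_ind_unique_le1 => i j; apply: P_unique.
Qed.

Lemma sum_deviation_unique_le (T I : finType) (P : I -> T -> Prop) N eps :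
  (0 < #|T|)%N -> (0 < N)%N -> 0 < eps -> 80 <= INR N * eps ^ 2 ->
  (forall q i j, P i q -> P j q -> i = j) ->
  \big[Rplus/0]_(i : I) prob (fun S : {ffun 'I_N -> T} =>
      eps < Rabs (sample_sum (fun q => ind (P i q)) S / INR N - mean (fun q => ind (P i q))))
  <= 2 * exp (3 - INR N * eps ^ 2 / 8).
Proof.
move=> T_nonempty N_gt0 eps_gt0 Neps2 P_unique.
apply: Rle_trans (sum_le (fun i => sample_mean_deviation (fun q => ind_01 _)
  T_nonempty N_gt0 eps_gt0 Neps2)) _.
rewrite -big_distrr -[X in _ <= X]Rmult_1_r.
apply: Rmult_le_compat_l; first by apply: Rmult_le_pos; [lra | exact/Rlt_le/exp_pos].
exact: sum_mean_ind_le1.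
Qed.

Lemma min_list_ge0 (s : seq R) : (forall x, x \in s -> 0 <= x) -> 0 <= min_list s.
Proof.
case: s => [|a s] s_ge0 /=; first lra.
elim: s s_ge0 => [|b s IH] s_ge0 /=; first by apply: s_ge0; rewrite inE eqxx.
apply: Rmin_glb; first by apply: s_ge0; rewrite !inE eqxx orbT.
by apply: IH => x x_in; apply: s_ge0; move: x_in; rewrite !inE => /orP [->|->]; rewrite ?orbT.
Qed.

Lemma hatcost_ge0 (d n k : nat) (p : 'I_n -> 'I_k -> point d) x :
  (0 < n)%N -> 0 <= hatcost p x.
Proof.
move=> n_gt0; apply: Rmult_le_pos; first exact/Rlt_le/Rinv_0_lt_compat/lt_0_INR/ltP.
apply: sum_ge0 => i; apply: min_list_ge0 => _ /mapP [j _ ->]; exact: sqrt_pos.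
Qed.

Lemma fT_is_dim0 (n k m : nat) (p : 'I_n -> 'I_k -> point 0) eps (z : 'I_m -> point 0) q i :
  (0 < n)%N -> 0 < eps -> fT_is p eps z q i.
Proof.
move=> n_gt0 eps_gt0.
have dist0 (x y : point 0) : dist x y = 0 by rewrite /dist big_ord0 sqrt_0.
split=> [|j _]; last by right; split; [rewrite !dist0 | left; case].
rewrite /covers dist0; apply: Rmult_le_pos; last exact: hatcost_ge0.
by apply: Rmult_le_pos; [lra | apply/Rlt_le/Rinv_0_lt_compat; lra].
Qed.

Lemma fT_is_unique (d n k m : nat) (p : 'I_n -> 'I_k -> point d) eps
    (z : 'I_m -> point d) q i j :
  (forall i j : 'I_m, i <> j -> exists c : 'I_d, z i c <> z j c) ->
  fT_is p eps z q i -> fT_is p eps z q j -> i = j.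
Proof.
move=> z_distinct [cov_i min_i] [cov_j min_j].
case: (eqVneq i j) => // /eqP i_neq_j; exfalso.
have [c zc_neq] := z_distinct i j i_neq_j.
case: (min_i j cov_j) => [lt_ij|[eq_ij lex_ij]];
  case: (min_j i cov_i) => [lt_ji|[eq_ji lex_ji]]; try lra.
case: lex_ij => [all_eq|[c1 [agree1 lt1]]]; first exact: zc_neq (all_eq c).
case: lex_ji => [all_eq|[c2 [agree2 lt2]]]; first by apply: zc_neq; rewrite all_eq.
case: (ltngtP c1 c2) => [c12|c21|/val_inj c12]; last subst c2; try lra.
- by have := agree2 c1 c12; lra.
- by have := agree1 c2 c21; lra.
Qed.

Lemma ln_inv_gt0 delta : 0 < delta < 1 -> 0 < ln (/ delta).
Proof.
move=> [delta_gt0 delta_lt1]; rewrite ln_Rinv //.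
by have := ln_increasing _ _ delta_gt0 delta_lt1; rewrite ln_1; lra.
Qed.

Lemma sample_size_bound (C eps D N : R) : 0 < eps -> 0 <= D ->
  N >= C / (eps * eps) * D -> C * D <= N * eps ^ 2.
Proof.
move=> eps_gt0 D_ge0 N_large.
have -> : C * D = C / (eps * eps) * D * eps ^ 2 by field; lra.
by apply: Rmult_le_compat_r; [apply: pow_le; lra | apply: Rge_le].
Qed.

Lemma tail_lt_delta (d A delta : R) : 0 < delta < 1 -> 1 <= d ->
  80 * (d + ln (/ delta)) <= A -> 2 * exp (3 - A / 8) < delta.
Proof.
move=> delta_bd d_ge1 A_large; have [delta_gt0 _] := delta_bd.
have ln_inv_pos := ln_inv_gt0 delta_bd.
have delta_exp : delta = exp (- ln (/ delta)) by rewrite ln_Rinv // Ropp_involutive exp_ln.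
have inv_exp7 : / exp 7 <= / 8.
  by apply: Rinv_le_contravar; [lra | have := exp_ineq1_le 7; lra].
have : exp (3 - A / 8) <= / exp 7 * delta.
  by rewrite [X in _ * X]delta_exp -exp_Ropp -exp_plus; apply: exp_le_compat; lra.
have := exp_pos 7; have := Rinv_0_lt_compat _ (exp_pos 7); nra.
Qed.

Theorem mainTheorem8 :
  exists C : R, 0 < C /\
  forall (d n k : nat) (p : 'I_n -> 'I_k -> point d) (eps delta : R)
         (m : nat) (z : 'I_m -> point d) (med : traversal n k -> point d)
         (N : nat),
    (0 < n)%N -> (0 < k)%N ->
    0 < eps -> 0 < delta < 1 ->
    (forall i j : 'I_m, i <> j -> exists c : 'I_d, z i c <> z j c) ->
    (forall Q : traversal n k, is_median p Q (med Q)) ->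
    (forall Q : traversal n k, exists i : 'I_m,
        covers p (eps / (1 + eps)) (z i) (med Q)) ->
    INR N >= C / (eps * eps) * (INR d + ln (/ delta)) ->
    prob_samples (fun S : {ffun 'I_N -> traversal n k} =>
      forall i : 'I_m,
        Rabs (cfreq p eps z med S i - what p eps z med i) <= eps)
    > 1 - delta.
Proof.
exists 80; split; first lra.
move=> d n k p eps delta m z med N n_gt0 k_gt0 eps_gt0 delta_bd z_distinct _ _ N_large.
have ln_pos := ln_inv_gt0 delta_bd; have d_ge0 := pos_INR d.
have Neps2 : 80 * (INR d + ln (/ delta)) <= INR N * eps ^ 2.
  by apply: sample_size_bound => //; lra.
have N_gt0 : (0 < N)%N.
  apply/ltP/INR_lt; have := pos_INR N.
  have : 0 < eps ^ 2 by apply: pow_lt.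
  rewrite /=; nra.
have T_nonempty : (0 < #|{: traversal n k}|)%N by rewrite card_ffun !card_ord expn_gt0 k_gt0.
pose X i Q := ind (fT_is p eps z (med Q) i).
apply: (@prob_forall_gt _ _ _
  (fun i S => Rabs (cfreq p eps z med S i - what p eps z med i) <= eps)
  (fun i S => eps < Rabs (sample_sum (X i) S / INR N - mean (X i)))).
- by rewrite card_ffun expn_gt0 T_nonempty.
- by move=> i S /Rnot_le_lt.
(* In dimension 0 all points coincide, so f_T(q) = z_i for every i and all
   frequencies are exactly 1; the sample size gives no bound on N eps^2 there. *)
have [d0|d_gt0] := posnP d.
  subst d; rewrite big1 => [|i _]; first by case: delta_bd.
  apply: sample_mean_deviation_const1 => //; last lra.
  by move=> Q; apply: ind_true; apply: fT_is_dim0.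
have d_ge1 : 1 <= INR d by apply: (le_INR 1); apply/leP.
apply: Rle_lt_trans (tail_lt_delta delta_bd d_ge1 Neps2).
apply: sum_deviation_unique_le => //; first lra.
by move=> Q i j; apply: fT_is_unique.
Qed.
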